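(* Let $k\ge1$, let $a_1,\ldots,a_k$ be positive integers, let $\theta=(\theta_1,\ldots,\theta_k)$ be a $k$-tuple of nonnegative integers, and let $r$ be an integer. Then the residue mod $2$ of $$\sum_{B}\prod_{i=1}^k\binom{a_i+b_i-2}{b_i},$$ where $B=(b_1,\ldots,b_k)$ ranges over all $k$-tuples of nonnegative integers with $b_1+\cdots+b_k=k-r$ and $B+\theta\in\mathcal{S}_k$, depends only on the residues $a_i\bmod 2^{\lg(2i)}$, $i=1,\ldots,k$.
   Context: $\mathcal{S}_k$ is the set of $k$-tuples of nonnegative integers such that, for every $j$, the sum of the first $j$ components is $\le j$. $\lg(x)=\lfloor\log_2x\rfloor$. Binomial coefficients are $\binom{x}{b}=x(x-1)\cdots(x-b+1)/b!$ for integer $x$ and $b\ge0$ (so $\binom{-1}{0}=1$). (This sum is the formula, due to earlier work of the author, for $\phi(R^{m-r}V_{j_1}\cdots V_{j_r})$ in the top cohomology of a planar polygon space with a single gene $\{m+3,g_1,\ldots,g_k\}$, $a_i=g_i-g_{i+1}$, $\theta=\theta(\{j_1,\ldots,j_r\})$.) *)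

From mathcomp Require Import all_boot all_order all_algebra.
Set Implicit Arguments. Unset Strict Implicit. Unset Printing Implicit Defensive.
Import Order.TTheory GRing.Theory Num.Theory.
Local Open Scope ring_scope.

(* Generalized binomial coefficient for an integer upper argument:
   binz x b = x(x-1)...(x-b+1) / b!  (the division is exact). *)
Definition binz (x : int) (b : nat) : int :=
  ((\prod_(i < b) (x - (i : nat)%:Z)) %/ (b`!)%:Z)%Z.

Definition lg (x : nat) : nat := trunc_log 2 x.

(* c : 'I_k -> nat (index i stands for i+1) lies in S_k:
   for every j = 1..k, c_1 + ... + c_j <= j. *)
Definition inS (k : nat) (c : 'I_k -> nat) : bool :=
  [forall j : 'I_k, (\sum_(i < k | (i <= j)%N) c i <= j.+1)%N].

(* Every such B has all b_i <= k (from the S_k condition at j = k),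
   so B ranges over {ffun 'I_k -> 'I_k.+1} without loss. *)
Definition gsum (k : nat) (a theta : 'I_k -> nat) (r : int) : int :=
  \sum_(B : {ffun 'I_k -> 'I_k.+1} |
          (Posz (\sum_(i < k) (B i : nat))%N == k%:Z - r)
          && inS (fun i => (B i : nat) + theta i))
     \prod_(i < k) binz ((a i)%:Z + (B i : nat)%:Z - 2) (B i).

(* For [b < p ^ L] the residue of ['C(n, b)] mod a prime [p] depends only on
   [n mod p ^ L]: by Vandermonde, ['C(p ^ L + n, b)] is ['C(n, b)] plus terms
   divisible by [p].  In the sum, the [S_k] condition forces [b_i <= i], and
   [i < 2 ^ lg (2 i)], so every factor [C(a_i + b_i - 2, b_i)] has its residue
   mod 2 determined by [a_i mod 2 ^ lg (2 i)]. *)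
From mathcomp Require Import all_boot all_order all_algebra.
From mathcomp Require Import zify.
Import Order.TTheory GRing.Theory Num.Theory.

Lemma prime_dvd_bin_pexp p L j : prime p -> 0 < j < p ^ L -> p %| 'C(p ^ L, j).
Proof.
case: j => [//|j] p_pr /andP[_ lt_j].
apply/negPn/negP => ndvd.
have cop : coprime (p ^ L) 'C(p ^ L, j.+1).
  case: L lt_j ndvd => [|L] _ ndvd; first by rewrite coprime1n.
  by rewrite coprime_pexpl // prime_coprime.
have : p ^ L %| j.+1 * 'C(p ^ L, j.+1) by rewrite -mul_bin_diag dvdn_mulr.
rewrite mulnC Gauss_dvdr // => /(dvdn_leq (ltn0Sn j)).
by rewrite leqNgt lt_j.
Qed.

Lemma bin_pexpD_mod p L n b : prime p -> b < p ^ L ->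
  'C(p ^ L + n, b) = 'C(n, b) %[mod p].
Proof.
move=> p_pr lt_b.
rewrite -binomial.Vandermonde big_ord_recl /= bin0 mul1n subn0 -modnDm.
have -> : (\sum_(i < b) 'C(p ^ L, bump 0 i) * 'C(n, b - bump 0 i)) %% p = 0.
  apply/eqP/dvdn_sum => i _; apply/dvdn_mulr/prime_dvd_bin_pexp => //.
  by rewrite /bump /= add1n (leq_ltn_trans (ltn_ord i) lt_b).
by rewrite addn0 modn_mod.
Qed.

Lemma bin_mod_pexp p L n n' b : prime p -> b < p ^ L ->
  n = n' %[mod p ^ L] -> 'C(n, b) = 'C(n', b) %[mod p].
Proof.
move=> p_pr lt_b eq_n.
have shift t m : 'C(p ^ L * t + m, b) = 'C(m, b) %[mod p].
  by elim: t => [|t IHt]; rewrite ?muln0 // mulnS -addnA bin_pexpD_mod.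
rewrite (divn_eq n (p ^ L)) (divn_eq n' (p ^ L)) eq_n.
by rewrite ![_ %/ _ * _]mulnC !shift.
Qed.

Local Open Scope ring_scope.

Lemma eqz_mod_sum (I : Type) (r : seq I) (P : pred I) (F G : I -> int) d :
  (forall i, P i -> F i = G i %[mod d])%Z ->
  (\sum_(i <- r | P i) F i = \sum_(i <- r | P i) G i %[mod d])%Z.
Proof.
move=> eqFG; apply: (big_ind2 (fun x y => x = y %[mod d])%Z) => //.
by move=> x1 x2 y1 y2 e1 e2; rewrite -modzDm e1 e2 modzDm.
Qed.

Lemma eqz_mod_prod (I : Type) (r : seq I) (P : pred I) (F G : I -> int) d :
  (forall i, P i -> F i = G i %[mod d])%Z ->
  (\prod_(i <- r | P i) F i = \prod_(i <- r | P i) G i %[mod d])%Z.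
Proof.
move=> eqFG; apply: (big_ind2 (fun x y => x = y %[mod d])%Z) => //.
by move=> x1 x2 y1 y2 e1 e2; rewrite -modzMm e1 e2 modzMm.
Qed.

Lemma binz0 x : binz x 0 = 1.
Proof. by rewrite /binz big_ord0. Qed.

Lemma binz_nat (n b : nat) : binz n%:Z b = 'C(n, b)%:Z.
Proof.
have prod_ffact : \prod_(i < b) (n%:Z - (i : nat)%:Z) = (n ^_ b)%:Z.
  elim: b => [|b IHb]; first by rewrite big_ord0 ffactn0.
  rewrite big_ord_recr /= IHb ffactnSr.
  case: (leqP b n) => [le_bn|lt_nb]; first by rewrite PoszM -subzn.
  by rewrite ffact_small // !mul0r.
by rewrite /binz prod_ffact -bin_ffact divz_nat mulnK ?fact_gt0.
Qed.

Lemma binz_sub2_mod_pexp p L (a a' b : nat) : prime p ->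
  (0 < a)%N -> (0 < a')%N -> (b < p ^ L)%N -> a = a' %[mod p ^ L] ->
  (binz (a%:Z + b%:Z - 2) b = binz (a'%:Z + b%:Z - 2) b %[mod p])%Z.
Proof.
case: b => [|b] p_pr a_gt0 a'_gt0 lt_b eq_a; first by rewrite !binz0.
have natE c : (0 < c)%N -> c%:Z + b.+1%:Z - 2 = (c.-1 + b)%N%:Z.
  by case: c => [|c] //= _; lia.
rewrite !natE // !binz_nat !modz_nat; congr Posz.
apply: bin_mod_pexp p_pr lt_b _.
apply/eqP; rewrite -(eqn_modDr 1) !(addnAC _ b 1) !addn1 !prednK //.
by rewrite eqn_modDr eq_a.
Qed.

Lemma inS_le k (c : 'I_k -> nat) : inS c -> forall i : 'I_k, (c i <= i.+1)%N.
Proof.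
move=> /forallP cS i; apply: leq_trans (cS i).
by rewrite (bigD1 i) //= leq_addr.
Qed.

Lemma lg_double_gt n : (n < 2 ^ lg (2 * n))%N.
Proof.
have := trunc_log_ltn (2 * n) (isT : (1 < 2)%N).
by rewrite /lg expnS ltn_pmul2l.
Qed.

Theorem corollary4p3 (k : nat) (a a' theta : 'I_k -> nat) (r : int) :
  (1 <= k)%N ->
  (forall i, 0 < a i)%N ->
  (forall i, 0 < a' i)%N ->
  (forall i : 'I_k, a i = a' i %[mod 2 ^ lg (2 * i.+1)]) ->
  (gsum a theta r %% 2 = gsum a' theta r %% 2)%Z.
Proof.
move=> _ a_gt0 a'_gt0 eq_a; apply: eqz_mod_sum => B /andP[_ /inS_le le_B].
apply: eqz_mod_prod => i _; apply: binz_sub2_mod_pexp (eq_a i) => //.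
apply: leq_ltn_trans (lg_double_gt _).
exact: leq_trans (leq_addr _ _) (le_B i).
Qed.
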